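(* Let $M$ be a closed oriented triangulated $3$-manifold, with $N_0$ vertices and $N_1$ edges, in which every tetrahedron has four distinct vertices, and let generic coordinates $(x_A,y_A,z_A)\in\mathbb R^3$ be assigned to its vertices. Consider the sequence of linear maps $$0\longrightarrow \mathfrak e(3)\xrightarrow{f_1}(dx)\xrightarrow{f_2}(dl)\xrightarrow{f_3}(d\omega)\xrightarrow{f_4}(dx^* )\xrightarrow{f_5}\mathfrak e(3)^*\longrightarrow 0,$$ with $f_4=-f_2^{\mathrm T}$ and $f_5=f_1^{\mathrm T}$. Then this sequence is an algebraic complex: the composition of any two successive maps is zero.
   Context: Triangulations need not be combinatorial: a simplex may appear several times in the boundary of a higher simplex, and several simplices may share the same vertices; only the four vertices of each tetrahedron are required to be distinct. The coordinates are in general position with respect to all algebraic constructions below; in particular no oriented volume vanishes. The length of edge $AB$ is $l_{AB}=\sqrt{(x_B-x_A)^2+(y_B-y_A)^2+(z_B-z_A)^2}$. Each tetrahedron is written $ABCD$ with its vertices in an order giving its positive orientation (induced by the orientation of $M$), and its oriented volume is $V_{ABCD}=\frac16\det(\overrightarrow{AB},\overrightarrow{AC},\overrightarrow{AD})$, which may be of either sign. The inner dihedral angles of the Euclidean tetrahedron are taken with the sign of its volume, and are regarded as functions of the six edge lengths. For an edge $i$, the deficit angle is $\omega_i=-\sum_k\varphi_i^{(k)} \bmod 2\pi$, where the sum runs over the tetrahedra around $i$ and $\varphi_i^{(k)}$ is the signed dihedral angle of the $k$-th tetrahedron at $i$; here all edge lengths are allowed to vary independently (when lengths come from coordinates, $\omega_i\equiv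 0$). The spaces are spaces of column vectors: $\mathfrak e(3)$ is the $6$-dimensional Lie algebra of infinitesimal motions of $\mathbb R^3$ (basis: three translations and three rotations); $(dx)$ and $(dx^* )$ have dimension $3N_0$ with coordinates indexed by $(dx_A,dy_A,dz_A)$ over vertices $A$; $(dl)$ and $(d\omega)$ have dimension $N_1$ indexed by edges. The map $f_1$ sends an infinitesimal motion to the induced infinitesimal displacements of the vertex points $(x_A,y_A,z_A)$; $f_2$ is the Jacobian matrix of the edge lengths with respect to vertex coordinates; $f_3=(\partial\omega_i/\partial l_j)$, evaluated at the lengths coming from the coordinates. (The matrix $f_3$ is known to be symmetric.) *)

From HB Require Import structures.
From mathcomp Require Import all_boot all_order all_algebra all_fingroup.
From mathcomp Require Import all_classical all_reals all_analysis.

Set Implicit Arguments.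
Unset Strict Implicit.
Unset Printing Implicit Defensive.
Import Order.TTheory GRing.Theory Num.Theory.
Local Open Scope ring_scope.

(* Triangulations (Delta-complexes) obtained by gluing tetrahedra.          *)
(* Tetrahedron t has ordered vertices tv t 0..3 (order = positive           *)
(* orientation), edge-slot {a,b} carries the edge te t a b, face i is the   *)
(* face opposite vertex i; it is glued to face (glue_p t i i) of tetrahedron *)
(* glue_t t i, the vertex j of t going to vertex (glue_p t i j).            *)
Record triangulation (V E T : finType) := Triangulation {
  tv : T -> 'I_4 -> V;
  te : T -> 'I_4 -> 'I_4 -> E;
  ends : E -> V * V;
  glue_t : T -> 'I_4 -> T;
  glue_p : T -> 'I_4 -> {perm 'I_4}
}.

Section Comb.
Variables (V E T : finType) (K : triangulation V E T).

(* corner (t,a) is glued to corner (s,b) across a face containing vertex a *)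
Definition corner_rel : rel (T * 'I_4) := fun ta sb =>
  [exists i : 'I_4, [&& i != ta.2, glue_t K ta.1 i == sb.1 &
                        glue_p K ta.1 i ta.2 == sb.2]].

(* oriented edge-slot (t,a,b) glued to (s,c,d) across a face containing a,b *)
Definition edge_rel : rel (T * 'I_4 * 'I_4) := fun tab scd =>
  [exists i : 'I_4, [&& i != tab.1.2, i != tab.2, glue_t K tab.1.1 i == scd.1.1,
                        glue_p K tab.1.1 i tab.1.2 == scd.1.2 &
                        glue_p K tab.1.1 i tab.2 == scd.2]].

(* number of corners of tetrahedra at vertex v (= triangles of the link) *)
Definition n_corners (v : V) : nat := #|[set ta : T * 'I_4 | tv K ta.1 ta.2 == v]|.
(* number of edges incident to v (= vertices of the link) *)
Definition n_edges_at (v : V) : nat :=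
  #|[set e : E | ((ends K e).1 == v) || ((ends K e).2 == v)]|.

Definition closed_oriented_3manifold : Prop :=
  [/\
      (forall t, injective (tv K t)),
      (forall t a b, te K t a b = te K t b a),
      (forall t a b, a != b ->
         ends K (te K t a b) = (tv K t a, tv K t b) \/
         ends K (te K t a b) = (tv K t b, tv K t a)),
      (* face pairings: involutive, fixed-point free, compatible with the *)
      (* vertex and edge labels, and orientation reversing (coherent      *)
      (* orientation of all tetrahedra)                                   *)
      (forall t i, let s := glue_t K t i in let p := glue_p K t i in
         [/\ glue_t K s (p i) = t /\ glue_p K s (p i) = (p^-1)%g,
             (s, p i) != (t, i),
             (forall j, j != i -> tv K s (p j) = tv K t j),
             (forall j k, j != i -> k != i -> te K s (p j) (p k) = te K t j k)
           & odd_perm p]) &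
      (* vertices and edges are exactly the classes of the gluing *)
      [/\ (forall v, exists t a, tv K t a = v),
          (forall e, exists t a b, a != b /\ te K t a b = e),
          (forall t a s b, tv K t a = tv K s b -> connect corner_rel (t, a) (s, b)),
          (forall t a b s c d, a != b -> c != d -> te K t a b = te K s c d ->
              connect edge_rel (t, a, b) (s, c, d) \/
              connect edge_rel (t, a, b) (s, d, c)) &
          (* manifold condition: each vertex link (a connected closed      *)
          (* surface by the above) has Euler characteristic 2, i.e. is a   *)
          (* 2-sphere: chi = n_edges_at v - n_corners v / 2 = 2            *)
          (forall v, (n_corners v + 4 = 2 * n_edges_at v)%N)]].

End Comb.

Section Geom.
Variables (R : realType) (V E T : finType) (K : triangulation V E T).

Definition coords := V -> 'I_3 -> R.

Definition edge_len (x : coords) (e : E) : R :=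
  Num.sqrt (\sum_(c < 3) (x (ends K e).2 c - x (ends K e).1 c) ^+ 2).

Definition tet_vol (x : coords) (t : T) : R :=
  \det (\matrix_(r < 3, c < 3) (x (tv K t (lift ord0 r)) c - x (tv K t ord0) c)) / 6.

(* Euclidean inner dihedral angle at edge ab of a tetrahedron abcd, as a  *)
(* function of its edge lengths L (via the Gram matrix of ab, ac, ad)      *)
Definition dihedral (L : 'I_4 -> 'I_4 -> R) (a b c d : 'I_4) : R :=
  let guu := L a b ^+ 2 in
  let gvv := L a c ^+ 2 in
  let gww := L a d ^+ 2 in
  let guv := (L a b ^+ 2 + L a c ^+ 2 - L b c ^+ 2) / 2 in
  let guw := (L a b ^+ 2 + L a d ^+ 2 - L b d ^+ 2) / 2 in
  let gvw := (L a c ^+ 2 + L a d ^+ 2 - L c d ^+ 2) / 2 in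
  acos ((guu * gvw - guv * guw) /
        Num.sqrt ((guu * gvv - guv ^+ 2) * (guu * gww - guw ^+ 2))).

Definition signed_dihedral (x : coords) (l : E -> R) (t : T) (a b c d : 'I_4) : R :=
  Num.sg (tet_vol x t) * dihedral (fun p q => l (te K t p q)) a b c d.

(* -(sum of signed dihedral angles around edge i); the deficit angle is   *)
(* this quantity mod 2 pi, which has the same derivatives                 *)
Definition deficit_lift (x : coords) (l : E -> R) (i : E) : R :=
  - \sum_(t : T) \sum_(a : 'I_4) \sum_(b : 'I_4) \sum_(c : 'I_4) \sum_(d : 'I_4)
      (if [&& (a < b)%N, (c < d)%N, [&& a != c, a != d, b != c & b != d]
            & te K t a b == i]
       then signed_dihedral x l t a b c d else 0).

(* index types: e(3) (3 translations, 3 rotations) and (dx) = (dx^* ) *)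
Definition e3 := ('I_3 + 'I_3)%type.
Definition dxi := (V * 'I_3)%type.

Definition levi (i j k : 'I_3) : R :=
  if [|| i == j, j == k | i == k] then 0
  else if (j == (i.+1 %% 3)%N :> nat) then 1 else -1.

(* f1 : e(3) -> (dx): infinitesimal motion b |-> displacements of vertices *)
Definition f1 (x : coords) (p : dxi) (b : e3) : R :=
  match b with
  | inl k => (p.2 == k)%:R
  | inr k => \sum_(m < 3) levi p.2 k m * x p.1 m
  end.

Definition f2 (x : coords) (e : E) (p : dxi) : R :=
  derive1 (fun s : R => edge_len
            (fun B c => x B c + (if (B == p.1) && (c == p.2) then s else 0)) e) 0.

Definition f3 (x : coords) (i j : E) : R :=
  derive1 (fun s : R => deficit_lift x
            (fun e => edge_len x e + (if e == j then s else 0)) i) 0.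

Definition f4 (x : coords) (p : dxi) (i : E) : R := - f2 x i p.
Definition f5 (x : coords) (b : e3) (p : dxi) : R := f1 x p b.

End Geom.

From HB Require Import structures.
From mathcomp Require Import all_boot all_order all_algebra all_fingroup.
From mathcomp Require Import all_classical all_reals all_analysis.
From mathcomp Require Import ring lra.

(* Rigid motions preserve edge lengths, so f2 f1 = 0, and f5 f4 = -(f2 f1)^T.
   When a vertex moves, the dihedral angle at the edge [ab] of a tetrahedron
   [abcd] changes by the difference of two terms, one attached to the face
   [abc] and one to the face [abd].  Around an edge of a closed oriented
   manifold every such face term occurs twice, once for each of the two
   tetrahedra sharing the face, with opposite signs because the gluing
   reverses orientation; hence f3 f2 = 0.  Finally the Jacobian of the
   dihedral angles of a Euclidean tetrahedron with respect to its edge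
   lengths is symmetric, so f3 is symmetric and f4 f3 = -(f3 f2)^T = 0.
   The dihedral angles are handled through their cosines, written with the
   Gram matrix of the edge vectors, i.e. with the squared edge lengths. *)

Set Implicit Arguments.
Unset Strict Implicit.
Unset Printing Implicit Defensive.
Import Order.TTheory GRing.Theory Num.Theory.
Local Open Scope ring_scope.

Section Derive1.
Variable R : realType.
Implicit Types (f g : R -> R) (x a b c : R).

Definition has_der x f a := is_derive x 1 f a.

Lemma has_der_cst x a : has_der x (fun _ => a) 0.
Proof. exact: is_derive_cst. Qed.

Lemma has_der_id x : has_der x id 1.
Proof. exact: is_derive_id. Qed.

Lemma has_derD f g x a b : has_der x f a -> has_der x g b ->
  has_der x (fun s => f s + g s) (a + b).
Proof. exact: is_deriveD. Qed.

Lemma has_derB f g x a b : has_der x f a -> has_der x g b ->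
  has_der x (fun s => f s - g s) (a - b).
Proof. exact: is_deriveB. Qed.

Lemma has_derN f x a : has_der x f a -> has_der x (fun s => - f s) (- a).
Proof. exact: is_deriveN. Qed.

Lemma has_derM f g x a b : has_der x f a -> has_der x g b ->
  has_der x (fun s => f s * g s) (f x * b + g x * a).
Proof. exact: is_deriveM. Qed.

Lemma has_derV f x a : f x != 0 -> has_der x f a ->
  has_der x (fun s => (f s)^-1) (- (f x) ^- 2 * a).
Proof. exact: is_deriveV. Qed.

Lemma has_der_comp f g x a b : is_derive (g x) 1 f a -> has_der x g b ->
  has_der x (fun s => f (g s)) (a * b).
Proof. exact: is_derive1_comp. Qed.

Lemma has_der_sqrt f x a : 0 < f x -> has_der x f a ->
  has_der x (fun s => Num.sqrt (f s)) ((2 * Num.sqrt (f x))^-1 * a).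
Proof. by move=> f_gt0 /(has_der_comp (is_derive1_sqrt f_gt0)). Qed.

Lemma has_der_acos f x a : -1 < f x < 1 -> has_der x f a ->
  has_der x (fun s => acos (f s)) (- (Num.sqrt (1 - f x ^+ 2))^-1 * a).
Proof. by move=> f_bd /(has_der_comp (is_derive1_acos f_bd)). Qed.

Lemma has_der_eq f x a b : has_der x f a -> a = b -> has_der x f b.
Proof. by move=> ? <-. Qed.

Lemma has_der_ext f g x a : f =1 g -> has_der x f a -> has_der x g a.
Proof. by move=> /funext ->. Qed.

Lemma has_der_sum (I : Type) (r : seq I) (P : pred I) (h : I -> R -> R) (dh : I -> R) x :
  (forall i, P i -> has_der x (h i) (dh i)) ->
  has_der x (fun s => \sum_(i <- r | P i) h i s) (\sum_(i <- r | P i) dh i).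
Proof.
move=> dh_h; elim: r => [|i r IHr].
  apply: (has_der_ext (f := fun _ => 0)); first by move=> s; rewrite big_nil.
  by rewrite big_nil; exact: has_der_cst.
rewrite big_cons; case: (boolP (P i)) => Pi.
  apply: (has_der_ext (f := fun s => h i s + \sum_(j <- r | P j) h j s)).
    by move=> s; rewrite big_cons Pi.
  exact: has_derD (dh_h i Pi) IHr.
apply: (has_der_ext (f := fun s => \sum_(j <- r | P j) h j s)) => // s.
by rewrite big_cons (negbTE Pi).
Qed.

Lemma derive1_has_der f x a : has_der x f a -> derive1 f x = a.
Proof. by move=> df; rewrite derive1E; exact: derive_val. Qed.

Lemma has_der_affine x a c : has_der x (fun s => a + s * c) c.
Proof.
apply: has_der_eq (has_derD (has_der_cst _ a) (has_derM (has_der_id x) (has_der_cst _ c))) _.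
by rewrite mulr0 mulr1 !add0r.
Qed.

Lemma has_der_sqr f x a : has_der x f a -> has_der x (fun s => f s ^+ 2) (2 * f x * a).
Proof.
move=> df; apply: (has_der_ext (f := fun s => f s * f s)) => [s|]; first by rewrite expr2.
by apply: has_der_eq (has_derM df df) _; ring.
Qed.

Lemma has_derZ f x a c : has_der x f a -> has_der x (fun s => c * f s) (c * a).
Proof. by move=> df; apply: has_der_eq (has_derM (has_der_cst _ c) df) _; ring. Qed.

End Derive1.

Lemma lift_inord n (i : 'I_n.+2) (j : 'I_n.+1) : lift i j = inord (bump i j).
Proof. by apply: val_inj; rewrite /= inordK //; exact: (ltn_ord (lift i j)). Qed.

Lemma ord0_inord n : ord0 = inord 0 :> 'I_n.+1.
Proof. by apply: val_inj; rewrite /= inordK. Qed.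

Lemma inord_eq k m n : (m < k.+1)%N -> (n < k.+1)%N ->
  (inord m == inord n :> 'I_k.+1) = (m == n).
Proof. by move=> ltmk ltnk; apply/eqP/eqP => [/(congr1 val)|->//]; rewrite /= !inordK. Qed.

(* Normalizes the concrete ordinals produced by expanding big sums and
   determinants over ['I_3] and ['I_4] into the form [inord k]. *)
Ltac inord_simpl :=
  rewrite ?lift_inord /= ?ord0_inord /bump /=; rewrite ?inordK; [ | exact isT ..];
  rewrite ?addnE /=; rewrite ?inord_eq; [ | exact isT ..]; rewrite /=.

Lemma ord3_cases (i : 'I_3) : [\/ i = inord 0, i = inord 1 | i = inord 2].
Proof.
by case: i => [[|[|[|n]]] lti] //; [constructor 1|constructor 2|constructor 3];
  apply: val_inj; rewrite /= inordK.
Qed.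

Lemma ord4_cases (i : 'I_4) : [\/ i = inord 0, i = inord 1, i = inord 2 | i = inord 3].
Proof.
by case: i => [[|[|[|[|n]]]] lti] //; [constructor 1|constructor 2|constructor 3|constructor 4];
  apply: val_inj; rewrite /= inordK.
Qed.

Lemma sum_ord3 (R : nmodType) (F : 'I_3 -> R) :
  \sum_(c < 3) F c = F (inord 0) + F (inord 1) + F (inord 2).
Proof. by rewrite !big_ord_recl big_ord0; inord_simpl; rewrite addr0 addrA. Qed.

Section Det3.
Variable R : comNzRingType.

Lemma det_mx22E (B : 'M[R]_2) :
  \det B = B (inord 0) (inord 0) * B (inord 1) (inord 1)
           - B (inord 0) (inord 1) * B (inord 1) (inord 0).
Proof.
rewrite (expand_det_row _ ord0) !big_ord_recl big_ord0 /cofactor !det_mx11 !mxE.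
inord_simpl; ring.
Qed.

Lemma det_mx33E (B : 'M[R]_3) :
  \det B =
    B (inord 0) (inord 0) * (B (inord 1) (inord 1) * B (inord 2) (inord 2)
                             - B (inord 1) (inord 2) * B (inord 2) (inord 1))
  - B (inord 0) (inord 1) * (B (inord 1) (inord 0) * B (inord 2) (inord 2)
                             - B (inord 1) (inord 2) * B (inord 2) (inord 0))
  + B (inord 0) (inord 2) * (B (inord 1) (inord 0) * B (inord 2) (inord 1)
                             - B (inord 1) (inord 1) * B (inord 2) (inord 0)).
Proof.
rewrite (expand_det_row _ ord0) !big_ord_recl big_ord0 /cofactor !det_mx22E !mxE.
inord_simpl; ring.
Qed.

End Det3.

Definition dihedral_slot (a b c d : 'I_4) :=
  [&& (a < b)%N, (c < d)%N & [&& a != c, a != d, b != c & b != d]].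

Definition distinct4 (a b c d : 'I_4) :=
  [&& a != b, a != c, a != d & [&& b != c, b != d & c != d]].

Lemma dihedral_slot_distinct4 a b c d : dihedral_slot a b c d -> distinct4 a b c d.
Proof.
case/and3P => ltab ltcd /and4P[ac ad bc bd].
by rewrite /distinct4 ac ad bc bd -val_eqE (ltn_eqF ltab) -val_eqE (ltn_eqF ltcd).
Qed.

Lemma distinct4P a b c d : distinct4 a b c d ->
  [/\ a != b, a != c, a != d & [/\ b != c, b != d & c != d]].
Proof. by case/and4P => ? ? ? /and3P[? ? ?]; split. Qed.

Lemma distinct4_complete (p q : 'I_4) : p != q -> exists r s, distinct4 p q r s.
Proof.
case: (ord4_cases p) => ->; case: (ord4_cases q) => -> //; rewrite ?inord_eq // => _;
 [exists (inord 2), (inord 3)|exists (inord 1), (inord 3)|exists (inord 1), (inord 2)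
 |exists (inord 2), (inord 3)|exists (inord 0), (inord 3)|exists (inord 0), (inord 2)
 |exists (inord 1), (inord 3)|exists (inord 0), (inord 3)|exists (inord 0), (inord 1)
 |exists (inord 1), (inord 2)|exists (inord 0), (inord 2)|exists (inord 0), (inord 1)];
 by rewrite /distinct4 ?inord_eq.
Qed.

Lemma dihedral_slot_cases a b c d : dihedral_slot a b c d ->
  [\/ (a, b, c, d) = (inord 0, inord 1, inord 2, inord 3),
      (a, b, c, d) = (inord 0, inord 2, inord 1, inord 3) |
   [\/ (a, b, c, d) = (inord 0, inord 3, inord 1, inord 2),
      (a, b, c, d) = (inord 1, inord 2, inord 0, inord 3) |
   [\/ (a, b, c, d) = (inord 1, inord 3, inord 0, inord 2) |
      (a, b, c, d) = (inord 2, inord 3, inord 0, inord 1)]]].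
Proof.
have slot_vals : dihedral_slot a b c d -> ((val a, val b, val c, val d) \in
   [:: (0,1,2,3); (0,2,1,3); (0,3,1,2); (1,2,0,3); (1,3,0,2); (2,3,0,1)]%N).
  by case: a => [[|[|[|[|?]]]] ?] //; case: b => [[|[|[|[|?]]]] ?] //;
     case: c => [[|[|[|[|?]]]] ?] //; case: d => [[|[|[|[|?]]]] ?] //.
have E n (i : 'I_n.+1) k : val i = k -> i = inord k by move=> <-; rewrite inord_val.
move=> /slot_vals; rewrite !inE => /orP[/eqP[/E-> /E-> /E-> /E->]|/orP[/eqP[/E-> /E-> /E-> /E->]|
   /orP[/eqP[/E-> /E-> /E-> /E->]|/orP[/eqP[/E-> /E-> /E-> /E->]|
   /orP[/eqP[/E-> /E-> /E-> /E->]|/eqP[/E-> /E-> /E-> /E->]]]]]].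
- by constructor 1.
- by constructor 2.
- by constructor 3; constructor 1.
- by constructor 3; constructor 2.
- by constructor 3; constructor 3; constructor 1.
- by constructor 3; constructor 3; constructor 2.
Qed.

Section SlotSum.
Variable R : comNzRingType.
Implicit Types F G : 'I_4 -> 'I_4 -> 'I_4 -> 'I_4 -> R.

Definition slot_sum F : R :=
  \sum_a \sum_b \sum_c \sum_d (if dihedral_slot a b c d then F a b c d else 0).

Lemma slot_sumE F : slot_sum F =
  F (inord 0) (inord 1) (inord 2) (inord 3) + F (inord 0) (inord 2) (inord 1) (inord 3) +
  F (inord 0) (inord 3) (inord 1) (inord 2) + F (inord 1) (inord 2) (inord 0) (inord 3) +
  F (inord 1) (inord 3) (inord 0) (inord 2) + F (inord 2) (inord 3) (inord 0) (inord 1).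
Proof. by rewrite /slot_sum !big_ord_recl !big_ord0 /dihedral_slot; inord_simpl; ring. Qed.

Lemma eq_slot_sum F G : (forall a b c d, dihedral_slot a b c d -> F a b c d = G a b c d) ->
  slot_sum F = slot_sum G.
Proof.
move=> eqFG; do 4![apply: eq_bigr => ? _]; by case: ifP => // /eqFG.
Qed.

Lemma slot_sumZ k F : k * slot_sum F = slot_sum (fun a b c d => k * F a b c d).
Proof. by rewrite !slot_sumE; ring. Qed.

Lemma slot_sum_big (J : finType) (F : J -> 'I_4 -> 'I_4 -> 'I_4 -> 'I_4 -> R) :
  \sum_j slot_sum (F j) = slot_sum (fun a b c d => \sum_j F j a b c d).
Proof. by rewrite slot_sumE -!big_split; apply: eq_bigr => j _; rewrite slot_sumE. Qed.

Lemma exchange_slot_sum (F : 'I_4 -> 'I_4 -> 'I_4 -> 'I_4 -> 'I_4 -> 'I_4 -> 'I_4 -> 'I_4 -> R) :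
  slot_sum (fun a b c d => slot_sum (F a b c d)) =
  slot_sum (fun a' b' c' d' => slot_sum (fun a b c d => F a b c d a' b' c' d')).
Proof. by rewrite !slot_sumE; ring. Qed.

(* Each ordered quadruple of distinct vertices is a dihedral slot up to
   swapping [a, b] and swapping [c, d]. *)
Lemma sum_distinct4 F : (forall a b c d, F b a c d = F a b c d) ->
  \sum_a \sum_b \sum_c \sum_d (if distinct4 a b c d then F a b c d else 0) =
  2 * slot_sum (fun a b c d => F a b c d + F a b d c).
Proof.
move=> Fswap; rewrite slot_sumE !big_ord_recl !big_ord0 /distinct4; inord_simpl.
rewrite ?(Fswap (inord 1) (inord 0)) ?(Fswap (inord 2) (inord 0)) ?(Fswap (inord 3) (inord 0))
  ?(Fswap (inord 2) (inord 1)) ?(Fswap (inord 3) (inord 1)) ?(Fswap (inord 3) (inord 2)).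
ring.
Qed.

End SlotSum.

Section Vectors.
Variable R : realType.
Implicit Types (u v w du dv dw : 'I_3 -> R).

Definition dot u v :=
  u (inord 0) * v (inord 0) + u (inord 1) * v (inord 1) + u (inord 2) * v (inord 2).

Definition triple u v w :=
  u (inord 0) * (v (inord 1) * w (inord 2) - v (inord 2) * w (inord 1))
  - u (inord 1) * (v (inord 0) * w (inord 2) - v (inord 2) * w (inord 0))
  + u (inord 2) * (v (inord 0) * w (inord 1) - v (inord 1) * w (inord 0)).

(* By Lagrange's identity, [cross_dot u v w = (u x v) . (u x w)] and
   [cross_sq u v = |u x v|^2]. *)
Definition cross_dot u v w := dot u u * dot v w - dot u v * dot u w.
Definition cross_sq u v := dot u u * dot v v - dot u v ^+ 2.

Definition cross_dot_der u v w du dv dw :=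
  2 * dot u du * dot v w + dot u u * (dot dv w + dot v dw)
  - (dot du v + dot u dv) * dot u w - dot u v * (dot du w + dot u dw).
Definition cross_sq_der u v du dv :=
  2 * dot u du * dot v v + dot u u * (2 * dot v dv) - 2 * dot u v * (dot du v + dot u dv).

(* [face_rate u v du dv / |u|] is, up to sign, the angular velocity about [u]
   of the half-plane spanned by [u] and [v] when they move with velocities
   [du] and [dv]. *)
Definition face_rate_num u v du dv := dot u u * triple u v dv - dot u v * triple u v du.
Definition face_rate u v du dv := face_rate_num u v du dv / cross_sq u v.

Lemma sin2_dihedral_identity u v w :
  cross_sq u v * cross_sq u w - cross_dot u v w ^+ 2 = dot u u * triple u v w ^+ 2.
Proof. by rewrite /cross_sq /cross_dot /dot /triple; ring. Qed.

Lemma dihedral_der_identity u v w du dv dw :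
  2 * cross_dot_der u v w du dv dw * (cross_sq u v * cross_sq u w) -
    cross_dot u v w * (cross_sq_der u v du dv * cross_sq u w +
                       cross_sq u v * cross_sq_der u w du dw) =
  - 2 * triple u v w *
    (face_rate_num u w du dw * cross_sq u v - face_rate_num u v du dv * cross_sq u w).
Proof.
by rewrite /cross_sq_der /cross_sq /cross_dot_der /cross_dot /face_rate_num /dot /triple; ring.
Qed.

Lemma cross_sq_sum_sqr u v : cross_sq u v =
  (u (inord 1) * v (inord 2) - u (inord 2) * v (inord 1)) ^+ 2 +
  (u (inord 2) * v (inord 0) - u (inord 0) * v (inord 2)) ^+ 2 +
  (u (inord 0) * v (inord 1) - u (inord 1) * v (inord 0)) ^+ 2.
Proof. by rewrite /cross_sq /dot; ring. Qed.

Lemma cross_sq_gt0 u v w : triple u v w != 0 -> 0 < cross_sq u v.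
Proof.
move=> tuvw_neq0; rewrite cross_sq_sum_sqr.
set c0 := (u (inord 1) * v (inord 2) - u (inord 2) * v (inord 1)).
set c1 := (u (inord 2) * v (inord 0) - u (inord 0) * v (inord 2)).
set c2 := (u (inord 0) * v (inord 1) - u (inord 1) * v (inord 0)).
have tripleE : triple u v w = c0 * w (inord 0) + c1 * w (inord 1) + c2 * w (inord 2).
  by rewrite /c0 /c1 /c2 /triple; ring.
rewrite lt_neqAle !addr_ge0 ?sqr_ge0 // andbT eq_sym.
apply: contra tuvw_neq0; rewrite tripleE paddr_eq0 ?addr_ge0 ?sqr_ge0 // paddr_eq0 ?sqr_ge0 //.
by rewrite !sqrf_eq0 => /andP[/andP[/eqP-> /eqP->] /eqP->]; rewrite !mul0r !addr0.
Qed.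

Lemma dot_self_gt0 u v : 0 < cross_sq u v -> 0 < dot u u.
Proof.
rewrite /cross_sq => cross_gt0; rewrite lt_neqAle eq_sym.
have -> : 0 <= dot u u by rewrite /dot !addr_ge0 // -expr2 sqr_ge0.
rewrite andbT; apply: contraTneq cross_gt0 => ->.
by rewrite mul0r sub0r oppr_gt0 -leNgt sqr_ge0.
Qed.

Lemma tripleC23 u v w : triple u w v = - triple u v w.
Proof. by rewrite /triple; ring. Qed.

Definition vsub u v : 'I_3 -> R := fun k => v k - u k.

Lemma face_rate_swap a b c da db dc :
  face_rate (vsub b a) (vsub b c) (vsub db da) (vsub db dc) =
  - face_rate (vsub a b) (vsub a c) (vsub da db) (vsub da dc).
Proof.
rewrite /face_rate.
have -> : cross_sq (vsub b a) (vsub b c) = cross_sq (vsub a b) (vsub a c).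
  by rewrite /cross_sq /vsub /dot; ring.
by rewrite -mulNr; congr (_ / _); rewrite /face_rate_num /vsub /dot /triple; ring.
Qed.

End Vectors.

Section Orientation.
Variable R : realType.
Implicit Types (P : 'I_4 -> 'I_3 -> R) (a b c d : 'I_4).

Definition det_pts P a b c d := triple (vsub (P a) (P b)) (vsub (P a) (P c)) (vsub (P a) (P d)).

Definition affine_mx P : 'M[R]_4 := \matrix_(i, j) (if j == ord0 then 1 else P i (inord j.-1)).

Lemma det_affine_mx P : \det (affine_mx P) = det_pts P (inord 0) (inord 1) (inord 2) (inord 3).
Proof.
rewrite (expand_det_col _ ord0) !big_ord_recl big_ord0 /cofactor !det_mx33E !mxE /=.
by inord_simpl; rewrite /det_pts /vsub /triple; ring.
Qed.

Definition fun_mx (tau : 'I_4 -> 'I_4) : 'M[R]_4 := \matrix_(i, j) (tau i == j)%:R.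

Lemma affine_mx_comp P tau : affine_mx (P \o tau) = fun_mx tau *m affine_mx P.
Proof.
apply/matrixP => i j; rewrite !mxE (bigD1 (tau i)) //= !mxE eqxx mul1r big1 ?addr0 //.
by move=> k /negbTE; rewrite mxE eq_sym => ->; rewrite mul0r.
Qed.

Lemma fun_mx_perm (p : {perm 'I_4}) tau : fun_mx (p \o tau) = fun_mx tau *m perm_mx p.
Proof.
apply/matrixP => i j; rewrite !mxE (bigD1 (tau i)) //= !mxE eqxx mul1r big1 ?addr0 //.
by move=> k /negbTE; rewrite mxE eq_sym => ->; rewrite mul0r.
Qed.

Definition tuple4 a b c d : 'I_4 -> 'I_4 := fun i =>
  if i == inord 0 then a else if i == inord 1 then b else if i == inord 2 then c else d.

(* The sign of the ordering [a b c d] of the vertices: [1] or [-1] when they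
   are distinct, [0] otherwise. *)
Definition orient_sign a b c d := \det (fun_mx (tuple4 a b c d)).

Lemma det_ptsE P a b c d :
  det_pts P a b c d = orient_sign a b c d * det_pts P (inord 0) (inord 1) (inord 2) (inord 3).
Proof.
rewrite -det_affine_mx -det_mulmx -affine_mx_comp det_affine_mx.
by rewrite /det_pts /tuple4 /= !inord_eq.
Qed.

Lemma orient_sign_sqr a b c d : distinct4 a b c d -> orient_sign a b c d ^+ 2 = 1.
Proof.
case/distinct4P => ab ac ad [bc bd cd].
have tuple4_inj : injective (tuple4 a b c d).
  move=> i j; rewrite /tuple4.
  case: (ord4_cases i) => ->; case: (ord4_cases j) => ->; rewrite ?inord_eq //= => eq_ij;
    by move: ab ac ad bc bd cd; rewrite eq_ij ?eqxx.
rewrite /orient_sign; have -> : fun_mx (tuple4 a b c d) = perm_mx (perm tuple4_inj).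
  by apply/matrixP => i j; rewrite !mxE permE.
by rewrite det_perm sqrr_sign.
Qed.

Lemma orient_sign_odd_perm (p : {perm 'I_4}) a b c d : odd_perm p ->
  orient_sign (p a) (p b) (p c) (p d) = - orient_sign a b c d.
Proof.
move=> odd_p; rewrite /orient_sign.
have -> : tuple4 (p a) (p b) (p c) (p d) = p \o tuple4 a b c d.
  by apply/funext => i; rewrite /tuple4 /=; do 3 case: ifP => _ //.
by rewrite fun_mx_perm det_mulmx det_perm odd_p expr1 mulrN1.
Qed.

Let std_pts : 'I_4 -> 'I_3 -> R := fun i k => (val i == (val k).+1)%:R.

Lemma orient_signE a b c d : orient_sign a b c d = det_pts std_pts a b c d.
Proof.
rewrite det_ptsE (_ : det_pts std_pts _ _ _ _ = 1) ?mulr1 //.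
by rewrite /det_pts /vsub /triple /std_pts; inord_simpl; ring.
Qed.

Lemma orient_sign_swap12 a b c d : orient_sign b a c d = - orient_sign a b c d.
Proof. by rewrite !orient_signE /det_pts /vsub /triple; ring. Qed.

Lemma orient_sign_swap34 a b c d : orient_sign a b d c = - orient_sign a b c d.
Proof. by rewrite !orient_signE /det_pts /vsub /triple; ring. Qed.

End Orientation.

Arguments orient_sign {R} a b c d.

Section DihedralDerivative.
Variable R : realType.
Implicit Types (G H : 'I_4 -> 'I_4 -> R) (a b c d p q r : 'I_4).

(* For squared edge lengths [G], [gram G p q r] is the inner product of the
   edge vectors [pq] and [pr]. *)
Definition gram G p q r := (G p q + G p r - G q r) / 2.

(* The cosine of the dihedral angle at [ab] is [cos_num / sqrt cos_den2]. *)
Definition cos_num G a b c d := G a b * gram G a c d - gram G a b c * gram G a b d.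
Definition cos_den2 G a b c d :=
  (G a b * G a c - gram G a b c ^+ 2) * (G a b * G a d - gram G a b d ^+ 2).

Definition cos_num_der G H a b c d :=
  H a b * gram G a c d + G a b * gram H a c d - gram H a b c * gram G a b d
  - gram G a b c * gram H a b d.
Definition cos_den2_der G H a b c d :=
  (H a b * G a c + G a b * H a c - 2 * gram G a b c * gram H a b c) *
    (G a b * G a d - gram G a b d ^+ 2)
  + (G a b * G a c - gram G a b c ^+ 2) *
    (H a b * G a d + G a b * H a d - 2 * gram G a b d * gram H a b d).

Definition dihedral_der G H a b c d :=
  - (Num.sqrt (1 - (cos_num G a b c d / Num.sqrt (cos_den2 G a b c d)) ^+ 2))^-1 *
  (cos_num_der G H a b c d * (Num.sqrt (cos_den2 G a b c d))^-1 +
   cos_num G a b c d * (- (Num.sqrt (cos_den2 G a b c d)) ^- 2 *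
       ((2 * Num.sqrt (cos_den2 G a b c d))^-1 * cos_den2_der G H a b c d))).

Lemma dihedralE (L : 'I_4 -> 'I_4 -> R) a b c d :
  dihedral L a b c d = acos (cos_num (fun p q => L p q ^+ 2) a b c d /
                             Num.sqrt (cos_den2 (fun p q => L p q ^+ 2) a b c d)).
Proof. by []. Qed.

Section Variation.
Variables (Gs : R -> 'I_4 -> 'I_4 -> R) (H : 'I_4 -> 'I_4 -> R).
Hypothesis dGs : forall p q, has_der 0 (fun s => Gs s p q) (H p q).

Lemma has_der_gram p q r : has_der 0 (fun s => gram (Gs s) p q r) (gram H p q r).
Proof.
apply: (has_der_ext (f := fun s => 2^-1 * (Gs s p q + Gs s p r - Gs s q r))).
  by move=> s; rewrite mulrC.
apply: has_der_eq; first by apply/has_derZ/has_derB; first apply: has_derD; exact: dGs.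
by rewrite mulrC.
Qed.

Lemma has_der_cos_num a b c d :
  has_der 0 (fun s => cos_num (Gs s) a b c d) (cos_num_der (Gs 0) H a b c d).
Proof.
apply: has_der_eq.
  by apply: has_derB; apply: has_derM; (exact: dGs || exact: has_der_gram).
by rewrite /cos_num_der; ring.
Qed.

Lemma has_der_cos_den2 a b c d :
  has_der 0 (fun s => cos_den2 (Gs s) a b c d) (cos_den2_der (Gs 0) H a b c d).
Proof.
apply: has_der_eq.
  apply: has_derM; apply: has_derB;
    (apply: has_derM; (exact: dGs || exact: has_der_gram)) || apply: has_der_sqr;
    exact: has_der_gram.
by rewrite /cos_den2_der; ring.
Qed.

Lemma has_der_dihedral a b c d : 0 < cos_den2 (Gs 0) a b c d ->
  -1 < cos_num (Gs 0) a b c d / Num.sqrt (cos_den2 (Gs 0) a b c d) < 1 ->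
  has_der 0 (fun s => acos (cos_num (Gs s) a b c d / Num.sqrt (cos_den2 (Gs s) a b c d)))
          (dihedral_der (Gs 0) H a b c d).
Proof.
move=> den_gt0 cos_bd; apply: has_der_eq.
  apply: has_der_acos => //; apply: has_derM; first exact: has_der_cos_num.
  apply: has_derV; first by rewrite sqrtr_eq0 -ltNge.
  by apply: has_der_sqrt => //; exact: has_der_cos_den2.
by rewrite /dihedral_der; ring.
Qed.

End Variation.

Definition dihedral_der_num G H a b c d :=
  cos_num_der G H a b c d * cos_den2 G a b c d - cos_num G a b c d * cos_den2_der G H a b c d / 2.

Definition edge_ind p q : 'I_4 -> 'I_4 -> R :=
  fun r r' => ((r == p) && (r' == q) || (r == q) && (r' == p))%:R.

Definition edge_symmetric G := forall p q, G p q = G q p.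

Ltac sym_entries G_sym := rewrite
  ?(G_sym (inord 1) (inord 0)) ?(G_sym (inord 2) (inord 0)) ?(G_sym (inord 3) (inord 0))
  ?(G_sym (inord 2) (inord 1)) ?(G_sym (inord 3) (inord 1)) ?(G_sym (inord 3) (inord 2)).

Lemma dihedral_der_num_lin G H a b c d : edge_symmetric H -> dihedral_slot a b c d ->
  dihedral_der_num G H a b c d =
  slot_sum (fun p q _ _ => H p q * dihedral_der_num G (edge_ind p q) a b c d).
Proof.
move=> H_sym slot_abcd; rewrite slot_sumE.
case: (dihedral_slot_cases slot_abcd) => [| |[| |[|]]] [-> -> -> ->];
  rewrite /dihedral_der_num /cos_num_der /cos_den2_der /edge_ind /gram; inord_simpl;
  sym_entries H_sym; ring.
Qed.

Definition dihedral_coef G a b c d p q :=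
  dihedral_der_num G (edge_ind p q) a b c d / (G a b * cos_den2 G a b c d).

(* The symmetry of the Jacobian of the dihedral angles with respect to the
   edge lengths of a Euclidean tetrahedron. *)
Lemma dihedral_coef_sym G a b c d a' b' c' d' : edge_symmetric G ->
  dihedral_slot a b c d -> dihedral_slot a' b' c' d' ->
  G a b * cos_den2 G a b c d != 0 -> G a' b' * cos_den2 G a' b' c' d' != 0 ->
  dihedral_coef G a b c d a' b' = dihedral_coef G a' b' c' d' a b.
Proof.
move=> G_sym slot1 slot2 den1 den2; rewrite /dihedral_coef.
apply/eqP; rewrite eqr_div //; apply/eqP; move: den1 den2 => _ _.
case: (dihedral_slot_cases slot1) => [| |[| |[|]]] [-> -> -> ->];
case: (dihedral_slot_cases slot2) => [| |[| |[|]]] [-> -> -> ->];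
  rewrite /dihedral_der_num /cos_num_der /cos_den2_der /cos_den2 /cos_num /edge_ind /gram;
  inord_simpl; sym_entries G_sym; field; rewrite ?pnatr_eq0 ?oner_eq0 //.
Qed.

End DihedralDerivative.

Arguments edge_ind {R} p q.

Lemma sum_mul_delta (R : pzSemiRingType) (I : finType) (F : I -> R) (i0 : I) :
  \sum_i F i * (i == i0)%:R = F i0.
Proof.
rewrite (bigD1 i0) //= eqxx mulr1 big1 ?addr0 // => i /negbTE ->.
by rewrite mulr0.
Qed.

Lemma sum_delta_mul (R : pzSemiRingType) (I : finType) (F : I -> R) (i0 : I) :
  \sum_i (i0 == i)%:R * F i = F i0.
Proof.
rewrite -[RHS](sum_mul_delta F); apply: eq_bigr => i _.
by rewrite eq_sym; case: (i == i0); rewrite ?mul0r ?mulr0 ?mul1r ?mulr1.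
Qed.

(* The rotation [e_k] moves a point [y] with velocity [e_k x y], orthogonal to [y]. *)
Lemma dot_levi_self (R : realType) (y : 'I_3 -> R) k :
  \sum_(c < 3) y c * \sum_(m < 3) levi R c k m * y m = 0.
Proof. by rewrite !sum_ord3; case: (ord3_cases k) => ->; rewrite /levi; inord_simpl; ring. Qed.

Section EdgeLength.
Variables (R : realType) (V E T : finType) (K : triangulation V E T) (x : coords R V).

Lemma sqlen_sym (A B : V) :
  \sum_(c < 3) (x B c - x A c) ^+ 2 = \sum_(c < 3) (x A c - x B c) ^+ 2.
Proof. by apply: eq_bigr => c _; rewrite -sqrrN opprB. Qed.

Lemma sqlen_dot (A B : V) :
  \sum_(c < 3) (x B c - x A c) ^+ 2 = dot (vsub (x A) (x B)) (vsub (x A) (x B)).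
Proof. by rewrite sum_ord3 /dot /vsub !expr2. Qed.

Lemma f2E (e : E) (p : dxi V) :
  let A := (ends K e).1 in let B := (ends K e).2 in
  0 < \sum_(c < 3) (x B c - x A c) ^+ 2 ->
  f2 K x e p = (x B p.2 - x A p.2) * ((B == p.1)%:R - (A == p.1)%:R) / edge_len K x e.
Proof.
move=> A B sqlen_gt0; rewrite /f2; apply: derive1_has_der.
set k : 'I_3 -> R := fun c => ((B == p.1)%:R - (A == p.1)%:R) * (c == p.2)%:R.
apply: (has_der_ext (f := fun s => Num.sqrt (\sum_(c < 3) (x B c - x A c + s * k c) ^+ 2))).
  move=> s; rewrite /edge_len -/A -/B; congr Num.sqrt; apply: eq_bigr => c _.
  congr (_ ^+ 2); rewrite /k.
  by case: (B == p.1); case: (A == p.1); case: (c == p.2); rewrite /= ?mulr0 ?mulr1; ring.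
apply: has_der_eq.
  apply: has_der_sqrt; last by apply: has_der_sum => c _; apply: has_der_sqr; exact: has_der_affine.
  by under eq_bigr do rewrite mul0r addr0.
rewrite /edge_len -/A -/B; under eq_bigr do rewrite mul0r addr0.
have -> : \sum_(c < 3) 2 * (x B c - x A c + 0 * k c) * k c =
          2 * ((x B p.2 - x A p.2) * ((B == p.1)%:R - (A == p.1)%:R)).
  rewrite -(sum_mul_delta (fun c => 2 * ((x B c - x A c) * ((B == p.1)%:R - (A == p.1)%:R))) p.2).
  by apply: eq_bigr => c _; rewrite /k; ring.
have sqrt_neq0 : Num.sqrt (\sum_(c < 3) (x B c - x A c) ^+ 2) != 0.
  by rewrite sqrtr_eq0 -ltNge.
by field.
Qed.

Lemma f2_f1 (e : E) (b : e3) :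
  0 < \sum_(c < 3) (x (ends K e).2 c - x (ends K e).1 c) ^+ 2 ->
  \sum_(p : dxi V) f2 K x e p * f1 x p b = 0.
Proof.
set A := (ends K e).1; set B := (ends K e).2 => sqlen_gt0.
rewrite -(pair_bigA _ (fun v c => f2 K x e (v, c) * f1 x (v, c) b)) /= exchange_big /=.
under eq_bigr => c _ do under eq_bigr => v _ do rewrite f2E //= -/A -/B.
have sum_vertices c : \sum_(v : V) (x B c - x A c) * ((B == v)%:R - (A == v)%:R) /
      edge_len K x e * f1 x (v, c) b =
      (x B c - x A c) / edge_len K x e * (f1 x (B, c) b - f1 x (A, c) b).
  rewrite mulrBr -(sum_delta_mul (fun v => f1 x (v, c) b) B).
  rewrite -(sum_delta_mul (fun v => f1 x (v, c) b) A).
  by rewrite !mulr_sumr -sumrB; apply: eq_bigr => v _; ring.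
under eq_bigr do rewrite sum_vertices.
clear sum_vertices; case: b => k /=; first by rewrite big1 // => c _; rewrite subrr mulr0.
rewrite (_ : \sum_(c < 3) _ = (edge_len K x e)^-1 * \sum_(c < 3) vsub (x A) (x B) c *
  \sum_(m < 3) levi R c k m * vsub (x A) (x B) m); last by rewrite /vsub !sum_ord3; ring.
by rewrite dot_levi_self mulr0.
Qed.

Lemma f5_f4 (b : e3) (j : E) :
  0 < \sum_(c < 3) (x (ends K j).2 c - x (ends K j).1 c) ^+ 2 ->
  \sum_(p : dxi V) f5 x b p * f4 K x p j = 0.
Proof.
move=> sqlen_gt0; apply/eqP; rewrite -oppr_eq0 -sumrN; apply/eqP.
rewrite -[RHS](f2_f1 b sqlen_gt0); apply: eq_bigr => p _.
by rewrite /f5 /f4 mulrN opprK mulrC.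
Qed.

End EdgeLength.

Lemma has_der_slot_sum (R : realType) (F : R -> 'I_4 -> 'I_4 -> 'I_4 -> 'I_4 -> R)
    (dF : 'I_4 -> 'I_4 -> 'I_4 -> 'I_4 -> R) :
  (forall a b c d, dihedral_slot a b c d -> has_der 0 (fun s => F s a b c d) (dF a b c d)) ->
  has_der 0 (fun s => slot_sum (F s)) (slot_sum dF).
Proof.
move=> dF_F; rewrite /slot_sum; do 4!(apply: has_der_sum => ? _).
by case: ifP => [/dF_F //|_]; exact: has_der_cst.
Qed.

Section Triangulated.
Variables (R : realType) (V E T : finType) (K : triangulation V E T).
Hypothesis HK : closed_oriented_3manifold K.
Variable x : coords R V.
Hypothesis Hgen : forall t : T, tet_vol K x t != 0.

Lemma te_sym t a b : te K t a b = te K t b a.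
Proof. by case: HK. Qed.

Lemma te_ends t a b : a != b ->
  ends K (te K t a b) = (tv K t a, tv K t b) \/ ends K (te K t a b) = (tv K t b, tv K t a).
Proof. by case: HK => _ _ te_ends _ _; exact: te_ends. Qed.

Lemma te_surj e : exists t a b, a != b /\ te K t a b = e.
Proof. by case: HK => _ _ _ _ [_ te_surj _ _ _]; exact: te_surj. Qed.

Definition tet_pts t : 'I_4 -> 'I_3 -> R := fun k c => x (tv K t k) c.
Definition tet_det t := det_pts (tet_pts t) (inord 0) (inord 1) (inord 2) (inord 3).

Lemma tet_volE t : tet_vol K x t = tet_det t / 6.
Proof.
rewrite /tet_vol det_mx33E !mxE; inord_simpl.
by rewrite /tet_det /det_pts /triple /vsub /tet_pts.
Qed.

Lemma tet_det_neq0 t : tet_det t != 0.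
Proof. by apply: contraNneq (Hgen t) => det0; rewrite tet_volE det0 mul0r. Qed.

Lemma det_pts_sqr t a b c d : distinct4 a b c d ->
  det_pts (tet_pts t) a b c d ^+ 2 = tet_det t ^+ 2.
Proof. by move=> abcd; rewrite det_ptsE exprMn orient_sign_sqr // mul1r. Qed.

Lemma det_pts_neq0 t a b c d : distinct4 a b c d -> det_pts (tet_pts t) a b c d != 0.
Proof.
by move=> /(det_pts_sqr t) sqr_eq; rewrite -sqrf_eq0 sqr_eq sqrf_eq0 tet_det_neq0.
Qed.

Lemma edge_dot_gt0 t p q : p != q ->
  0 < dot (vsub (tet_pts t p) (tet_pts t q)) (vsub (tet_pts t p) (tet_pts t q)).
Proof.
by case/distinct4_complete => r [s /(det_pts_neq0 t) /cross_sq_gt0 /dot_self_gt0].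
Qed.

Lemma edge_sqlen_gt0 e : 0 < \sum_(c < 3) (x (ends K e).2 c - x (ends K e).1 c) ^+ 2.
Proof.
have [t [a [b [ab <-]]]] := te_surj e.
by case: (te_ends t ab) => -> /=; last rewrite sqlen_sym;
  rewrite sqlen_dot; apply: edge_dot_gt0.
Qed.

Lemma edge_len_gt0 e : 0 < edge_len K x e.
Proof. by rewrite sqrtr_gt0 edge_sqlen_gt0. Qed.

Definition tet_len t p q := edge_len K x (te K t p q).
Definition tet_sqlen t : 'I_4 -> 'I_4 -> R := fun p q => tet_len t p q ^+ 2.

Lemma tet_len_sym t p q : tet_len t p q = tet_len t q p.
Proof. by rewrite /tet_len te_sym. Qed.

Lemma tet_sqlen_sym t : edge_symmetric (tet_sqlen t).
Proof. by move=> p q; rewrite /tet_sqlen tet_len_sym. Qed.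

Lemma tet_len_neq0 t p q : tet_len t p q != 0.
Proof. exact/lt0r_neq0/edge_len_gt0. Qed.

Lemma tet_sqlenE t p q : p != q ->
  tet_sqlen t p q = dot (vsub (tet_pts t p) (tet_pts t q)) (vsub (tet_pts t p) (tet_pts t q)).
Proof.
move=> pq; rewrite /tet_sqlen /tet_len sqr_sqrtr ?sumr_ge0 // => [|c _]; last exact: sqr_ge0.
by case: (te_ends t pq) => -> /=; last rewrite sqlen_sym; rewrite sqlen_dot.
Qed.

Section Slot.
Variables (t : T) (a b c d : 'I_4).
Hypothesis abcd : distinct4 a b c d.
Let u := vsub (tet_pts t a) (tet_pts t b).
Let v := vsub (tet_pts t a) (tet_pts t c).
Let w := vsub (tet_pts t a) (tet_pts t d).

Lemma cos_numE : cos_num (tet_sqlen t) a b c d = cross_dot u v w.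
Proof.
case: (distinct4P abcd) => ab ac ad [bc bd cd].
by rewrite /cos_num /gram !tet_sqlenE // /cross_dot /u /v /w /dot /vsub; field.
Qed.

Lemma cos_den2E : cos_den2 (tet_sqlen t) a b c d = cross_sq u v * cross_sq u w.
Proof.
case: (distinct4P abcd) => ab ac ad [bc bd cd].
by rewrite /cos_den2 /gram !tet_sqlenE // /cross_sq /u /v /w /dot /vsub; field.
Qed.

Lemma cos_den2_gt0 : 0 < cos_den2 (tet_sqlen t) a b c d.
Proof.
have uvw_neq0 : triple u v w != 0 by exact: det_pts_neq0.
rewrite cos_den2E mulr_gt0 ?(cross_sq_gt0 uvw_neq0) //.
by apply: (@cross_sq_gt0 _ _ _ v); rewrite tripleC23 oppr_eq0.
Qed.

Lemma one_sub_cos2 :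
  1 - (cos_num (tet_sqlen t) a b c d / Num.sqrt (cos_den2 (tet_sqlen t) a b c d)) ^+ 2 =
  (tet_len t a b * `|tet_det t| / Num.sqrt (cos_den2 (tet_sqlen t) a b c d)) ^+ 2.
Proof.
have den_neq0 := lt0r_neq0 cos_den2_gt0.
rewrite !expr_div_n sqr_sqrtr ?ltW ?cos_den2_gt0 // exprMn -/(tet_sqlen t a b).
rewrite real_normK ?num_real // -(det_pts_sqr t abcd) tet_sqlenE; last by case: (distinct4P abcd).
rewrite cos_numE -/u -(sin2_dihedral_identity u v w) -cos_den2E.
by field.
Qed.

Lemma cos_dihedral_bound :
  -1 < cos_num (tet_sqlen t) a b c d / Num.sqrt (cos_den2 (tet_sqlen t) a b c d) < 1.
Proof.
have sin2_gt0 : 0 < (tet_len t a b * `|tet_det t| / Num.sqrt (cos_den2 (tet_sqlen t) a b c d)) ^+ 2.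
  rewrite exprn_gt0 // divr_gt0 ?sqrtr_gt0 ?cos_den2_gt0 // mulr_gt0 ?edge_len_gt0 //.
  by rewrite normr_gt0 tet_det_neq0.
move: sin2_gt0; rewrite -one_sub_cos2 subr_gt0; set z := _ / _ => z2_lt1.
by apply/andP; split; nra.
Qed.

Lemma dihedral_derE H :
  dihedral_der (tet_sqlen t) H a b c d =
  - dihedral_der_num (tet_sqlen t) H a b c d /
    (tet_len t a b * `|tet_det t| * cos_den2 (tet_sqlen t) a b c d).
Proof.
have den_gt0 := cos_den2_gt0.
rewrite /dihedral_der one_sub_cos2 sqrtr_sqr ger0_norm; last first.
  by rewrite divr_ge0 ?sqrtr_ge0 // mulr_ge0 ?normr_ge0 // ltW // edge_len_gt0.
have det_neq0 : `|tet_det t| != 0 by rewrite normr_eq0 tet_det_neq0.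
have len_neq0 := tet_len_neq0 t a b.
rewrite /dihedral_der_num; set D := cos_den2 _ _ _ _ _ in den_gt0 *.
have D_sqr : D = Num.sqrt D ^+ 2 by rewrite sqr_sqrtr // ltW.
have sqrtD_neq0 : Num.sqrt D != 0 by rewrite sqrtr_eq0 -ltNge.
set sD := Num.sqrt D in D_sqr sqrtD_neq0 *.
by rewrite D_sqr; field; rewrite sqrtD_neq0 len_neq0 det_neq0.
Qed.

End Slot.

Definition tet_sqlen_dl t j : 'I_4 -> 'I_4 -> R :=
  fun p q => 2 * tet_len t p q * (te K t p q == j)%:R.

Lemma tet_sqlen_dl_sym t j : edge_symmetric (tet_sqlen_dl t j).
Proof. by move=> p q; rewrite /tet_sqlen_dl tet_len_sym te_sym. Qed.

Lemma has_der_slot_dihedral t j a b c d : distinct4 a b c d ->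
  has_der 0 (fun s => dihedral (fun p q => edge_len K x (te K t p q) +
                                 (if te K t p q == j then s else 0)) a b c d)
          (dihedral_der (tet_sqlen t) (tet_sqlen_dl t j) a b c d).
Proof.
move=> abcd.
pose Gs s p q := (edge_len K x (te K t p q) + (if te K t p q == j then s else 0)) ^+ 2.
have dGs p q : has_der 0 (fun s => Gs s p q) (tet_sqlen_dl t j p q).
  rewrite /Gs /tet_sqlen_dl /tet_len; case: (te K t p q == j) => /=.
    by apply: has_der_eq (has_der_sqr (has_derD (has_der_cst _ _) (has_der_id _))) _; ring.
  by apply: has_der_eq (has_der_cst _ _) _; ring.
have Gs0 : Gs 0 = tet_sqlen t.
  apply/funext => p; apply/funext => q.
  by rewrite /Gs /tet_sqlen /tet_len; case: ifP; rewrite addr0.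
apply: (has_der_ext (f := fun s => acos (cos_num (Gs s) a b c d /
                                          Num.sqrt (cos_den2 (Gs s) a b c d)))).
  by move=> s; rewrite dihedralE.
rewrite -Gs0; apply: has_der_dihedral dGs _ _ _ _ _ _; rewrite Gs0.
  exact: cos_den2_gt0.
exact: cos_dihedral_bound.
Qed.

Lemma deficit_lift_slot_sum l i : deficit_lift K x l i =
  - \sum_t slot_sum (fun a b c d => (te K t a b == i)%:R * signed_dihedral K x l t a b c d).
Proof.
congr (- _); apply: eq_bigr => t _; rewrite /slot_sum.
apply: eq_bigr => a _; apply: eq_bigr => b _; apply: eq_bigr => c _; apply: eq_bigr => d _.
rewrite /dihedral_slot; case: (a < b)%N; case: (c < d)%N => //=.
by case: [&& a != c, a != d, b != c & b != d]; case: (te K t a b == i); rewrite /= ?mul1r ?mul0r.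
Qed.

Lemma f3E i j : f3 K x i j = - \sum_t Num.sg (tet_vol K x t) *
  slot_sum (fun a b c d =>
    (te K t a b == i)%:R * dihedral_der (tet_sqlen t) (tet_sqlen_dl t j) a b c d).
Proof.
rewrite /f3; apply: derive1_has_der.
apply: (has_der_ext (f := fun s => - \sum_t slot_sum (fun a b c d => (te K t a b == i)%:R *
    signed_dihedral K x (fun e => edge_len K x e + (if e == j then s else 0)) t a b c d))).
  by move=> s; rewrite deficit_lift_slot_sum.
apply: has_derN; apply: has_der_sum => t _; rewrite slot_sumZ.
apply: has_der_slot_sum => a b c d /dihedral_slot_distinct4 abcd; rewrite /signed_dihedral.
by apply: has_der_eq (has_derZ _ (has_derZ _ (has_der_slot_dihedral t j abcd))) _; ring.
Qed.

Definition unit_disp t (p : dxi V) : 'I_4 -> 'I_3 -> R :=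
  fun k c => ((tv K t k == p.1) && (c == p.2))%:R.

Definition tet_sqlen_dx t (p : dxi V) : 'I_4 -> 'I_4 -> R :=
  fun q r => 2 * tet_len t q r * f2 K x (te K t q r) p.

Lemma tet_sqlen_dx_sym t p : edge_symmetric (tet_sqlen_dx t p).
Proof. by move=> q r; rewrite /tet_sqlen_dx tet_len_sym te_sym. Qed.

Lemma tet_sqlen_dxE t p q r : q != r -> tet_sqlen_dx t p q r =
  2 * dot (vsub (tet_pts t q) (tet_pts t r)) (vsub (unit_disp t p q) (unit_disp t p r)).
Proof.
move=> qr; rewrite /tet_sqlen_dx f2E ?edge_sqlen_gt0 // /tet_len.
have := tet_len_neq0 t q r; rewrite /tet_len; set L := edge_len K x _ => L_neq0.
case: p => v k /=; case: (te_ends t qr) => -> /=;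
  rewrite /dot /vsub /unit_disp /tet_pts /=; case: (ord3_cases k) => ->; inord_simpl;
  rewrite ?andbT ?andbF /=; field; exact: L_neq0.
Qed.

Lemma f2_tet_sqlen_dl t p q r : \sum_j f2 K x j p * tet_sqlen_dl t j q r = tet_sqlen_dx t p q r.
Proof.
rewrite /tet_sqlen_dx -(sum_delta_mul (fun j => f2 K x j p) (te K t q r)) mulr_sumr.
by apply: eq_bigr => j _; rewrite /tet_sqlen_dl; ring.
Qed.

(* The contribution to the rotation of the dihedral angle at [ab] coming from
   the face [abc] when vertex coordinate [p] moves. *)
Definition face_term t p a b c :=
  face_rate (vsub (tet_pts t a) (tet_pts t b)) (vsub (tet_pts t a) (tet_pts t c))
            (vsub (unit_disp t p a) (unit_disp t p b)) (vsub (unit_disp t p a) (unit_disp t p c)).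

Lemma face_term_swap t p a b c : face_term t p b a c = - face_term t p a b c.
Proof. exact: face_rate_swap. Qed.

Section Motion.
Variables (t : T) (p : dxi V) (a b c d : 'I_4).
Hypothesis abcd : distinct4 a b c d.
Let u := vsub (tet_pts t a) (tet_pts t b).
Let v := vsub (tet_pts t a) (tet_pts t c).
Let w := vsub (tet_pts t a) (tet_pts t d).
Let du := vsub (unit_disp t p a) (unit_disp t p b).
Let dv := vsub (unit_disp t p a) (unit_disp t p c).
Let dw := vsub (unit_disp t p a) (unit_disp t p d).

Lemma cos_num_derE :
  cos_num_der (tet_sqlen t) (tet_sqlen_dx t p) a b c d = cross_dot_der u v w du dv dw.
Proof.
case: (distinct4P abcd) => ab ac ad [bc bd cd].
rewrite /cos_num_der /gram !tet_sqlenE // !tet_sqlen_dxE //.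
by rewrite /cross_dot_der /u /v /w /du /dv /dw /dot /vsub; field.
Qed.

Lemma cos_den2_derE : cos_den2_der (tet_sqlen t) (tet_sqlen_dx t p) a b c d =
  cross_sq_der u v du dv * cross_sq u w + cross_sq u v * cross_sq_der u w du dw.
Proof.
case: (distinct4P abcd) => ab ac ad [bc bd cd].
rewrite /cos_den2_der /gram !tet_sqlenE // !tet_sqlen_dxE //.
by rewrite /cross_sq_der /cross_sq /u /v /w /du /dv /dw /dot /vsub; field.
Qed.

Lemma dihedral_der_num_dxE : dihedral_der_num (tet_sqlen t) (tet_sqlen_dx t p) a b c d =
  - triple u v w *
    (face_rate_num u w du dw * cross_sq u v - face_rate_num u v du dv * cross_sq u w).
Proof.
rewrite /dihedral_der_num (cos_numE t abcd) (cos_den2E t abcd) cos_num_derE cos_den2_derE.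
by have := dihedral_der_identity u v w du dv dw; nra.
Qed.

Lemma dihedral_der_dxE :
  Num.sg (tet_vol K x t) * dihedral_der (tet_sqlen t) (tet_sqlen_dx t p) a b c d =
  orient_sign a b c d * (face_term t p a b d - face_term t p a b c) / tet_len t a b.
Proof.
have den_gt0 := cos_den2_gt0 t abcd.
rewrite (dihedral_derE t abcd) dihedral_der_num_dxE (cos_den2E t abcd).
rewrite /face_term /face_rate -/u -/v -/w -/du -/dv -/dw.
rewrite (cos_den2E t abcd) in den_gt0.
have [uv_neq0 uw_neq0] : cross_sq u v != 0 /\ cross_sq u w != 0.
  by move: (lt0r_neq0 den_gt0); rewrite mulf_eq0 negb_or => /andP.
have sg_neq0 : Num.sg (tet_det t) != 0 by rewrite sgr_eq0 tet_det_neq0.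
rewrite (_ : triple u v w = det_pts (tet_pts t) a b c d) // det_ptsE -/(tet_det t) tet_volE.
rewrite sgrM sgrV (gtr0_sg (ltr0n _ 6)) mulr1 normrEsg.
by field; rewrite sg_neq0 tet_det_neq0 tet_len_neq0 uv_neq0 uw_neq0.
Qed.

End Motion.

Definition face_contrib i p t a b c d :=
  if te K t a b == i then orient_sign a b c d * face_term t p a b c / edge_len K x i else 0.

Lemma face_contrib_swap i p t a b c d : face_contrib i p t b a c d = face_contrib i p t a b c d.
Proof.
by rewrite /face_contrib te_sym orient_sign_swap12 face_term_swap; case: ifP => // _; ring.
Qed.

Lemma dihedral_der_dx_faces i p t a b c d : dihedral_slot a b c d ->
  (te K t a b == i)%:R *
    (Num.sg (tet_vol K x t) * dihedral_der (tet_sqlen t) (tet_sqlen_dx t p) a b c d) =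
  - (face_contrib i p t a b c d + face_contrib i p t a b d c).
Proof.
move=> /dihedral_slot_distinct4 abcd; rewrite /face_contrib.
case: ifP => [/eqP te_i|_]; last by rewrite mul0r addr0 oppr0.
rewrite mul1r dihedral_der_dxE // /tet_len te_i orient_sign_swap34.
by field; rewrite lt0r_neq0 ?edge_len_gt0.
Qed.

Lemma glue_tet t d : let s := glue_t K t d in let g := glue_p K t d in
  [/\ glue_t K s (g d) = t /\ glue_p K s (g d) = (g^-1)%g,
      (forall j, j != d -> tv K s (g j) = tv K t j),
      (forall j k, j != d -> k != d -> te K s (g j) (g k) = te K t j k)
    & odd_perm g].
Proof. by case: HK => _ _ _ glue _; case: (glue t d) => ? _ ? ? ?; split. Qed.

(* Gluing tetrahedra along the face opposite [d] is an involution on the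
   quadruples [(t, a, b, c, d)] that negates [face_contrib]: the face [abc] is
   seen from both sides, with opposite orientations. *)
Lemma sum_face_contrib_eq0 i p :
  \sum_t \sum_a \sum_b \sum_c \sum_d
    (if distinct4 a b c d then face_contrib i p t a b c d else 0) = 0.
Proof.
pose g (z : T * 'I_4 * 'I_4 * 'I_4 * 'I_4) :=
  if distinct4 z.1.1.1.2 z.1.1.2 z.1.2 z.2
  then face_contrib i p z.1.1.1.1 z.1.1.1.2 z.1.1.2 z.1.2 z.2 else 0.
have -> : \sum_t \sum_a \sum_b \sum_c \sum_d
   (if distinct4 a b c d then face_contrib i p t a b c d else 0) = \sum_z g z.
  by rewrite !pair_bigA.
pose glue (z : T * 'I_4 * 'I_4 * 'I_4 * 'I_4) : T * 'I_4 * 'I_4 * 'I_4 * 'I_4 :=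
  let g := glue_p K z.1.1.1.1 z.2 in
  (glue_t K z.1.1.1.1 z.2, g z.1.1.1.2, g z.1.1.2, g z.1.2, g z.2).
have glueK : involutive glue.
  case=> [[[[t a] b] c] d]; rewrite /glue /=.
  by case: (glue_tet t d) => [[-> ->]] _ _ _; rewrite !permK.
have g_glue z : g (glue z) = - g z.
  case: z => [[[[t a] b] c] d]; rewrite /g /glue /=.
  have g_inj := @perm_inj _ (glue_p K t d).
  rewrite /distinct4 !(inj_eq g_inj) -/(distinct4 a b c d).
  case abcd: (distinct4 a b c d); last by rewrite oppr0.
  case: (distinct4P abcd) => _ _ ad [_ bd cd].
  case: (glue_tet t d) => _ tv_glue te_glue odd_g.
  rewrite /face_contrib (te_glue a b ad bd); case: ifP => _; last by rewrite oppr0.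
  rewrite orient_sign_odd_perm // /face_term /tet_pts /unit_disp.
  by rewrite (tv_glue a ad) (tv_glue b bd) (tv_glue c cd) !mulNr.
have sum_opp : \sum_z g z = - \sum_z g z.
  rewrite {1}(reindex_inj (inv_inj glueK)) -sumrN.
  by apply: eq_bigr => z _; exact: g_glue.
by lra.
Qed.

Lemma dihedral_der_dx_sum_eq0 i p :
  \sum_t slot_sum (fun a b c d => (te K t a b == i)%:R *
    (Num.sg (tet_vol K x t) * dihedral_der (tet_sqlen t) (tet_sqlen_dx t p) a b c d)) = 0.
Proof.
set S := \sum_t _; have two_neq0 : (2 : R) != 0 by rewrite pnatr_eq0.
have S_face_contrib : 2 * S = - \sum_t \sum_a \sum_b \sum_c \sum_d
    (if distinct4 a b c d then face_contrib i p t a b c d else 0).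
  rewrite mulr_sumr -sumrN; apply: eq_bigr => t _.
  rewrite sum_distinct4; last exact: face_contrib_swap.
  rewrite -mulrN; congr (2 * _); rewrite -mulN1r slot_sumZ.
  by apply: eq_slot_sum => a b c d slot; rewrite dihedral_der_dx_faces // mulN1r.
by apply: (mulfI two_neq0); rewrite S_face_contrib sum_face_contrib_eq0 oppr0 mulr0.
Qed.

Definition dihedral_dsqlen t a b c d p q :=
  - dihedral_der_num (tet_sqlen t) (edge_ind p q) a b c d /
    (tet_len t a b * `|tet_det t| * cos_den2 (tet_sqlen t) a b c d).

Lemma dihedral_der_decomp t H a b c d : edge_symmetric H -> dihedral_slot a b c d ->
  dihedral_der (tet_sqlen t) H a b c d =
  slot_sum (fun p q _ _ => H p q * dihedral_dsqlen t a b c d p q).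
Proof.
move=> H_sym slot; rewrite dihedral_derE ?dihedral_slot_distinct4 //.
by rewrite (dihedral_der_num_lin _ H_sym slot) /dihedral_dsqlen !slot_sumE; ring.
Qed.

Lemma dihedral_der_lin t p a b c d : dihedral_slot a b c d ->
  \sum_j dihedral_der (tet_sqlen t) (tet_sqlen_dl t j) a b c d * f2 K x j p =
  dihedral_der (tet_sqlen t) (tet_sqlen_dx t p) a b c d.
Proof.
move=> slot; rewrite (dihedral_der_decomp _ (tet_sqlen_dx_sym t p) slot).
under eq_bigr do rewrite (dihedral_der_decomp _ (tet_sqlen_dl_sym t _) slot) mulrC slot_sumZ.
rewrite slot_sum_big; apply: eq_slot_sum => q r _ _ _.
by rewrite -f2_tet_sqlen_dl mulr_suml; apply: eq_bigr => j _; ring.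
Qed.

Lemma f3_f2 i p : \sum_j f3 K x i j * f2 K x j p = 0.
Proof.
under eq_bigr do rewrite f3E mulNr mulr_suml.
rewrite sumrN exchange_big /=; apply/eqP; rewrite oppr_eq0; apply/eqP.
rewrite -[RHS](dihedral_der_dx_sum_eq0 i p); apply: eq_bigr => t _.
transitivity (\sum_j slot_sum (fun a b c d => (te K t a b == i)%:R *
  (Num.sg (tet_vol K x t) * (dihedral_der (tet_sqlen t) (tet_sqlen_dl t j) a b c d * f2 K x j p)))).
  by apply: eq_bigr => j _; rewrite !slot_sumE; ring.
rewrite slot_sum_big; apply: eq_slot_sum => a b c d slot.
by rewrite -!mulr_sumr dihedral_der_lin.
Qed.

Definition dihedral_jac t a b c d p q := 2 * tet_len t p q * dihedral_dsqlen t a b c d p q.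

Lemma dihedral_der_dlE t j a b c d : dihedral_slot a b c d ->
  dihedral_der (tet_sqlen t) (tet_sqlen_dl t j) a b c d =
  slot_sum (fun p q _ _ => (te K t p q == j)%:R * dihedral_jac t a b c d p q).
Proof.
move=> slot; rewrite (dihedral_der_decomp _ (tet_sqlen_dl_sym t j) slot).
by apply: eq_slot_sum => p q _ _ _; rewrite /tet_sqlen_dl /dihedral_jac; ring.
Qed.

Lemma dihedral_jac_sym t a b c d a' b' c' d' :
  dihedral_slot a b c d -> dihedral_slot a' b' c' d' ->
  dihedral_jac t a b c d a' b' = dihedral_jac t a' b' c' d' a b.
Proof.
move=> slot1 slot2.
have D1 := lt0r_neq0 (cos_den2_gt0 t (dihedral_slot_distinct4 slot1)).
have D2 := lt0r_neq0 (cos_den2_gt0 t (dihedral_slot_distinct4 slot2)).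
have L1 := tet_len_neq0 t a b; have L2 := tet_len_neq0 t a' b'.
have det_neq0 : `|tet_det t| != 0 by rewrite normr_eq0 tet_det_neq0.
have := dihedral_coef_sym (tet_sqlen_sym t) slot1 slot2
  (mulf_neq0 (expf_neq0 _ L1) D1) (mulf_neq0 (expf_neq0 _ L2) D2).
rewrite /dihedral_coef /dihedral_jac /dihedral_dsqlen /(tet_sqlen t a b) /(tet_sqlen t a' b').
set N1 := dihedral_der_num _ _ _ _ _ _; set N2 := dihedral_der_num _ _ _ _ _ _ => coef_sym.
transitivity (- 2 * tet_len t a b * tet_len t a' b' / `|tet_det t| *
  (N1 / (tet_len t a b ^+ 2 * cos_den2 (tet_sqlen t) a b c d))).
  by field; rewrite L1 D1 det_neq0.
by rewrite coef_sym; field; rewrite L2 D2 det_neq0.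
Qed.

Lemma f3_double_slot_sum i j : f3 K x i j = - \sum_t Num.sg (tet_vol K x t) *
  slot_sum (fun a b c d => slot_sum (fun a' b' c' d' =>
    (te K t a b == i)%:R * (te K t a' b' == j)%:R * dihedral_jac t a b c d a' b')).
Proof.
rewrite f3E; congr (- _); apply: eq_bigr => t _; congr (_ * _).
apply: eq_slot_sum => a b c d slot; rewrite (dihedral_der_dlE _ _ slot) slot_sumZ.
by apply: eq_slot_sum => a' b' c' d' _; ring.
Qed.

Lemma f3_sym i j : f3 K x i j = f3 K x j i.
Proof.
rewrite !f3_double_slot_sum; congr (- _); apply: eq_bigr => t _; congr (_ * _).
rewrite exchange_slot_sum; apply: eq_slot_sum => a b c d slot.
apply: eq_slot_sum => a' b' c' d' slot'.
by rewrite (dihedral_jac_sym t slot' slot); ring.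
Qed.

Lemma f4_f3 p j : \sum_i f4 K x p i * f3 K x i j = 0.
Proof.
apply/eqP; rewrite -oppr_eq0 -sumrN; apply/eqP.
rewrite -[RHS](f3_f2 j p); apply: eq_bigr => i _.
by rewrite /f4 f3_sym mulNr mulrC opprK.
Qed.

End Triangulated.

Theorem theorem1 (R : realType) (V E T : finType) (K : triangulation V E T)
  (HK : closed_oriented_3manifold K) (x : coords R V)
  (Hgen : forall t : T, tet_vol K x t != 0) :
  [/\ forall (e : E) (b : e3), \sum_(p : dxi V) f2 K x e p * f1 x p b = 0,
      forall (i : E) (p : dxi V), \sum_(e : E) f3 K x i e * f2 K x e p = 0,
      forall (p : dxi V) (j : E), \sum_(i : E) f4 K x p i * f3 K x i j = 0
    & forall (b : e3) (j : E), \sum_(p : dxi V) f5 x b p * f4 K x p j = 0].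
Proof.
split=> [e b | i p | p j | b j].
- exact: f2_f1 (edge_sqlen_gt0 HK Hgen e).
- exact: f3_f2.
- exact: f4_f3.
- exact: f5_f4 (edge_sqlen_gt0 HK Hgen j).
Qed.
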